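(* Let $G_1$ be the metric graph consisting of a loop of length $4$ (a single edge of length $4$ whose two endpoints are identified at a vertex $u$) together with one pendant edge of length $1$ attached at $u$ (so $u$ has degree $3$). Let $G_2$ be the metric graph with vertices $u,w$ joined by two parallel edges of length $1$, with one pendant edge of length $1$ attached at $u$ and two pendant edges of length $1$ attached at $w$ (so $u$ has degree $3$ and $w$ has degree $4$). Then $G_1$ and $G_2$ are isospectral with standard vertex conditions; in fact both have secular determinant $\Sigma(k)=\det(I-S_vS_e(k))=\frac13\left(e^{2ik}-1\right)^2\left(7e^{2ik}+7e^{4ik}+3e^{6ik}+3\right)$, where $S_v$ is the bond (vertex) scattering matrix with entries $2/d_v-1$ for reflection and $2/d_v$ for transmission at a vertex of degree $d_v$, and $S_e(k)$ is the diagonal matrix with entry $e^{ik\ell_b}$ on each directed bond $b$ of length $\ell_b$.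
   Context: On each edge the operator is $\mathbf{L}=-\frac{d^2}{dx^2}$ with standard (Neumann–Kirchhoff) vertex conditions: continuity at each vertex and vanishing sum of outward normal derivatives at each vertex. Eigenvalues are $\lambda=k^2$; two graphs are isospectral if they have the same eigenvalues with multiplicities. The nonzero eigenfrequencies $k>0$ (with multiplicity) are the zeros of the secular determinant $\det(I-S_vS_e(k))$. *)

From HB Require Import structures.
From mathcomp Require Import all_boot all_order all_algebra.
From mathcomp Require Import reals trigo.
From mathcomp Require Export complex.

Set Implicit Arguments.
Unset Strict Implicit.
Unset Printing Implicit Defensive.

Import Order.TTheory GRing.Theory Num.Theory.
Local Open Scope ring_scope.

Record qgraph (R : realType) := QGraph {
  qV : finType;
  qE : finType;
  qsrc : qE -> qV;
  qtgt : qE -> qV;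
  qlen : qE -> R }.

Section QuantumGraph.
Variables (R : realType) (G : qgraph R).

Definition bond : finType := (qE G * bool)%type.
Definition borig (b : bond) : qV G := if b.2 then qsrc b.1 else qtgt b.1.
Definition bterm (b : bond) : qV G := if b.2 then qtgt b.1 else qsrc b.1.
Definition brev (b : bond) : bond := (b.1, ~~ b.2).
Definition blen (b : bond) : R := qlen b.1.

(* degree of a vertex = number of bonds leaving it (a loop counts twice) *)
Definition qdeg (v : qV G) : nat := #|[set b : bond | borig b == v]|.

Definition expi (x : R) : R[i] := Complex (cos x) (sin x).

(* bond scattering matrix S_v, indexed by bonds: the entry (b', b) is the
   amplitude scattered from the incoming bond b into the outgoing bond b'
   at the vertex v = bterm b; it vanishes unless b' leaves v. *)
Definition Sv_entry (b' b : bond) : R[i] :=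
  if borig b' == bterm b then
    (((2%:R / (qdeg (bterm b))%:R - (b' == brev b)%:R : R))%:C)%C
  else 0.

Definition Se_entry (k : R) (b' b : bond) : R[i] :=
  if b' == b then expi (k * blen b) else 0.

Definition Sv_mx : 'M[R[i]]_#|bond| :=
  \matrix_(i, j) Sv_entry (enum_val i) (enum_val j).
Definition Se_mx (k : R) : 'M[R[i]]_#|bond| :=
  \matrix_(i, j) Se_entry k (enum_val i) (enum_val j).

Definition secular_det (k : R) : R[i] := \det (1%:M - Sv_mx *m Se_mx k).

End QuantumGraph.

(* G1: vertex u = 0, pendant end 1.  Edge 0 is the loop at u of length 4,
   edge 1 is the pendant edge u -- 1 of length 1. *)
Definition G1 (R : realType) : qgraph R :=
  @QGraph R 'I_2 'I_2
    (fun _ => ord0)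
    (fun e => if val e == 0%N then ord0 else ord_max)
    (fun e => if val e == 0%N then 4%:R else 1).

(* G2: vertices u = 0, w = 1, pendant ends 2, 3, 4.  Edges (all of length 1):
   0 : u -- w, 1 : u -- w, 2 : u -- 2, 3 : w -- 3, 4 : w -- 4. *)
Definition G2_src (e : 'I_5) : 'I_5 :=
  if (val e <= 2)%N then inord 0 else inord 1.
Definition G2_tgt (e : 'I_5) : 'I_5 :=
  if (val e <= 1)%N then inord 1 else e.
Definition G2 (R : realType) : qgraph R :=
  @QGraph R 'I_5 'I_5 G2_src G2_tgt (fun _ => 1).

Definition Sigma (R : realType) (k : R) : R[i] :=
  3%:R^-1 * (expi (2%:R * k) - 1) ^+ 2 *
  (7%:R * expi (2%:R * k) + 7%:R * expi (4%:R * k)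
   + 3%:R * expi (6%:R * k) + 3%:R).

(* Multiplying the row of I - S_v S_e(k) indexed by a bond b' by the degree
   of the vertex that b' leaves turns every entry into a polynomial with
   integer coefficients in z = e^{ik}, because all edge lengths are integers.
   The determinant of the scaled matrix, which is the product of the degrees
   times Sigma(k), can therefore be computed exactly on coefficient lists and
   compared with the coefficients of 3 Sigma. *)

(* Imported first, so that the MathComp delimiters %N and %Z take precedence. *)
From Stdlib Require Import BinInt.
From HB Require Import structures.
From mathcomp Require Import all_boot all_order all_algebra.
From mathcomp Require Import reals trigo complex.
From mathcomp Require Import ssrZ ring.
Import GRing.Theory Num.Theory.
Local Open Scope ring_scope.

(* Coefficient lists, constant term first, over the binary integers Z so that
   vm_compute evaluates them efficiently. *)
Definition zpoly := seq Z.

Fixpoint zpadd (p q : zpoly) : zpoly :=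
  match p, q with
  | [::], _ => q
  | _, [::] => p
  | a :: p', b :: q' => Z.add a b :: zpadd p' q'
  end.

Definition zpscale (c : Z) (p : zpoly) : zpoly := map (Z.mul c) p.

Fixpoint zpmul (p q : zpoly) : zpoly :=
  if p is a :: p' then zpadd (zpscale a q) (Z0 :: zpmul p' q) else [::].

Definition zpmono (n : nat) (c : Z) : zpoly := ncons n Z0 [:: c].

Definition zminor (A : nat -> nat -> zpoly) (j : nat) : nat -> nat -> zpoly :=
  fun i k => A i.+1 (bump j k).

Definition zpsign (j : nat) : Z := if odd j then Zneg 1 else Zpos 1.

(* Expansion along the first row; the minor of a zero entry is never computed,
   which keeps the sparse 10 x 10 determinant of G2 cheap. *)
Definition zlaplace n (A : nat -> nat -> zpoly)
    (det : (nat -> nat -> zpoly) -> zpoly) : zpoly :=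
  foldr zpadd [::]
    [seq if nilp (A 0%N j) then [::]
         else zpmul (zpscale (zpsign j) (A 0%N j)) (det (zminor A j))
    | j <- iota 0 n].

Fixpoint zpdet (n : nat) (A : nat -> nat -> zpoly) : zpoly :=
  if n is m.+1 then zlaplace n A (zpdet m) else [:: Zpos 1].

Section Evaluation.
Variables (F : comNzRingType) (z : F).

Definition zcast (c : Z) : F := (int_of_Z c)%:~R.

Lemma zcastD a b : zcast (Z.add a b) = zcast a + zcast b.
Proof. by rewrite /zcast rmorphD intrD. Qed.

Lemma zcastM a b : zcast (Z.mul a b) = zcast a * zcast b.
Proof. by rewrite /zcast rmorphM intrM. Qed.

Lemma zcast_nat n : zcast (Z.of_nat n) = n%:R.
Proof. by rewrite /zcast -[Z.of_nat n]/(Z_of_int n) Z_of_intK. Qed.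

Lemma zcast_sign j : zcast (zpsign j) = (-1) ^+ j.
Proof. by rewrite -signr_odd /zpsign; case: odd. Qed.

Fixpoint zpeval (p : zpoly) : F :=
  if p is a :: p' then zcast a + z * zpeval p' else 0.

Lemma zpevalD p q : zpeval (zpadd p q) = zpeval p + zpeval q.
Proof.
elim: p q => [|a p IH] [|b q] /=; rewrite ?add0r ?addr0 // zcastD IH; ring.
Qed.

Lemma zpevalZ c p : zpeval (zpscale c p) = zcast c * zpeval p.
Proof. by elim: p => [|a p IH] /=; rewrite ?mulr0 // zcastM IH; ring. Qed.

Lemma zpevalM p q : zpeval (zpmul p q) = zpeval p * zpeval q.
Proof.
elim: p => [|a p IH] /=; first by rewrite mul0r.
by rewrite zpevalD zpevalZ /= IH; ring.
Qed.

Lemma zpeval_mono n c : zpeval (zpmono n c) = zcast c * z ^+ n.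
Proof. by elim: n => [|n IH] /=; rewrite ?IH ?exprS; ring. Qed.

Lemma zpeval_sum (f : nat -> zpoly) s :
  zpeval (foldr zpadd [::] (map f s)) = \sum_(j <- s) zpeval (f j).
Proof. by elim: s => [|a s IH]; rewrite ?big_nil ?big_cons //= zpevalD IH. Qed.

Lemma zpeval_laplace n A (det : (nat -> nat -> zpoly) -> zpoly) :
    (forall B, zpeval (det B) = \det (\matrix_(i, j < n) zpeval (B i j))) ->
  zpeval (zlaplace n.+1 A det) = \det (\matrix_(i, j < n.+1) zpeval (A i j)).
Proof.
move=> detE; rewrite (expand_det_row _ ord0) zpeval_sum.
rewrite -[iota 0 n.+1]/(index_iota 0 n.+1) big_mkord.
apply: eq_bigr => j _; rewrite /cofactor.
have -> : row' ord0 (col' j (\matrix_(i, j < n.+1) zpeval (A i j)))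
          = \matrix_(i, k < n) zpeval (zminor A j i k).
  by apply/matrixP => i k; rewrite !mxE lift0.
rewrite -detE mxE; case: nilP => [->|_]; first by rewrite mul0r.
by rewrite zpevalM zpevalZ zcast_sign add0n; ring.
Qed.

Lemma zpeval_det n A :
  zpeval (zpdet n A) = \det (\matrix_(i, j < n) zpeval (A i j)).
Proof.
elim: n A => [|n IH] A; first by rewrite det_mx00 /= mulr0 addr0.
exact: zpeval_laplace.
Qed.
End Evaluation.


Arguments zcast {F} c.
Arguments zpeval {F} z p.

Section Expi.
Variable R : realType.

Lemma expi0 : expi (0 : R) = 1.
Proof. by rewrite /expi cos0 sin0. Qed.

Lemma expiD (x y : R) : expi (x + y) = expi x * expi y.
Proof.
rewrite /expi cosD sinD; apply/eqP; rewrite eq_complex /=.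
by apply/andP; split; apply/eqP; ring.
Qed.

Lemma expiMn (x : R) n : expi (x *+ n) = expi x ^+ n.
Proof. by elim: n => [|n IH]; rewrite ?expi0 // mulrS expiD IH exprS. Qed.

End Expi.

Definition Sigma3_coeffs : zpoly :=
  [:: Zpos 3; Z0; Zpos 1; Z0; Zneg 4; Z0; Zneg 4; Z0; Zpos 1; Z0; Zpos 3].

Lemma zpeval_Sigma3 (R : realType) (k : R) :
  zpeval (expi k) Sigma3_coeffs = 3%:R * Sigma k.
Proof.
rewrite /Sigma !(mulr_natl k) !expiMn /=.
rewrite [zcast Z0](_ : _ = 0) // [zcast (Zpos 1)](_ : _ = 1) //.
rewrite [zcast (Zpos 3)](_ : _ = 3%:R) // [zcast (Zneg 4)](_ : _ = - 4%:R) //.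
have three_neq0 : 3%:R != 0 :> R[i] by rewrite pnatr_eq0.
by field.
Qed.

(* A metric graph with integer edge lengths whose vertices and edges are
   numbered by naturals; code_bonds lists the bonds (edge, direction) in the
   order of enum, i.e. the order indexing S_v and S_e. *)
Record qgraph_code := QGraphCode {
  code_src : nat -> nat;
  code_tgt : nat -> nat;
  code_len : nat -> nat;
  code_bonds : seq (nat * bool) }.

Section CodeMatrix.
Variable c : qgraph_code.

Definition code_orig (b : nat * bool) : nat :=
  if b.2 then code_src c b.1 else code_tgt c b.1.

Definition code_term (b : nat * bool) : nat :=
  if b.2 then code_tgt c b.1 else code_src c b.1.

Definition code_deg (v : nat) : nat :=
  count (fun b => code_orig b == v) (code_bonds c).

(* Entry (b', b) of I - S_v S_e(k), multiplied by the degree d of the origin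
   of b', as a polynomial in z = e^{ik}. *)
Definition code_entry (b' b : nat * bool) : zpoly :=
  let d := code_deg (code_orig b') in
  zpadd (if b' == b then [:: Z.of_nat d] else [::])
        (if code_orig b' == code_term b then
           zpmono (code_len c b.1)
             (if b' == (b.1, ~~ b.2) then Z.sub (Z.of_nat d) (Zpos 2) else Zneg 2)
         else [::]).

Definition code_mx (i j : nat) : zpoly :=
  code_entry (nth (0%N, true) (code_bonds c) i) (nth (0%N, true) (code_bonds c) j).

Definition code_degprod : nat :=
  foldr muln 1%N [seq code_deg (code_orig b) | b <- code_bonds c].

Lemma code_degprod_neq0 : code_degprod != 0%N.
Proof.
rewrite -lt0n /code_degprod foldrE big_map big_seq prodn_cond_gt0 // => b b_in.
by rewrite -has_count; apply/hasP; exists b.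
Qed.

End CodeMatrix.

Section Encoding.
Variables (R : realType) (G : qgraph R) (c : qgraph_code).
Variables (vcode : qV G -> nat) (ecode : qE G -> nat).
Hypotheses (vcode_inj : injective vcode) (ecode_inj : injective ecode).
Hypotheses (vcode_src : forall e, vcode (qsrc e) = code_src c (ecode e))
           (vcode_tgt : forall e, vcode (qtgt e) = code_tgt c (ecode e))
           (qlen_code : forall e, qlen e = (code_len c (ecode e))%:R).

Definition bond_code (b : bond G) : nat * bool := (ecode b.1, b.2).

Hypothesis bond_codes : [seq bond_code b | b <- enum {: bond G}] = code_bonds c.

Lemma bond_code_inj : injective bond_code.
Proof. by move=> [e1 d1] [e2 d2] [/ecode_inj -> ->]. Qed.

Lemma vcode_borig b : vcode (borig b) = code_orig c (bond_code b).
Proof. by case: b => e []; rewrite /borig /code_orig /= ?vcode_src ?vcode_tgt. Qed.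

Lemma vcode_bterm b : vcode (bterm b) = code_term c (bond_code b).
Proof. by case: b => e []; rewrite /bterm /code_term /= ?vcode_src ?vcode_tgt. Qed.

Lemma qdeg_code v : qdeg v = code_deg c (vcode v).
Proof.
rewrite /qdeg /code_deg -bond_codes count_map cardsE cardE size_filter enumT.
by apply: eq_count => b /=; rewrite -vcode_borig (inj_eq vcode_inj).
Qed.

Lemma qdeg_borig_neq0 (b : bond G) : qdeg (borig b) != 0%N.
Proof. by rewrite -lt0n card_gt0; apply/set0Pn; exists b; rewrite inE. Qed.

Lemma code_entryE (k : R) (b' b : bond G) :
  zpeval (expi k) (code_entry c (bond_code b') (bond_code b)) =
  (qdeg (borig b'))%:R * ((b' == b)%:R - Sv_entry b' b * expi (k * blen b)).
Proof.
rewrite /code_entry zpevalD -!vcode_borig -vcode_bterm -qdeg_code.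
rewrite !(inj_eq bond_code_inj) (inj_eq vcode_inj) -[(_, ~~ _)]/(bond_code (brev b)).
rewrite (inj_eq bond_code_inj) /Sv_entry /blen qlen_code mulr_natr expiMn.
have d_neq0 : (qdeg (borig b'))%:R != 0 :> R[i] by rewrite pnatr_eq0 qdeg_borig_neq0.
case: (borig b' =P bterm b) => [<-|_]; last first.
  by case: (b' == b); rewrite /= ?zcast_nat; ring.
rewrite zpeval_mono rmorphB /= fmorph_div /= !rmorph_nat.
by case: (b' == b); case: (b' == brev b); rewrite /= ?zcastD ?zcast_nat /=; field.
Qed.

Lemma size_code_bonds : size (code_bonds c) = #|bond G|.
Proof. by rewrite -bond_codes size_map cardE. Qed.

Lemma nth_code_bonds (i : 'I_#|bond G|) :
  nth (0%N, true) (code_bonds c) i = bond_code (enum_val i).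
Proof. by rewrite -bond_codes (nth_map (enum_val i)) -?cardE // -enum_val_nth. Qed.

Lemma code_degprodE :
  (code_degprod c)%:R = \prod_(b : bond G) (qdeg (borig b))%:R :> R[i].
Proof.
rewrite /code_degprod -bond_codes foldrE !big_map natr_prod.
by apply: eq_bigr => b _; rewrite -vcode_borig -qdeg_code.
Qed.

Lemma code_mxE (k : R) :
  \matrix_(i, j < #|bond G|) zpeval (expi k) (code_mx c i j) =
  diag_mx (\row_i (qdeg (borig (enum_val i)))%:R) *m (1%:M - Sv_mx G *m Se_mx G k).
Proof.
apply/matrixP => i j; rewrite mul_diag_mx !mxE /code_mx !nth_code_bonds code_entryE.
rewrite (bigD1 j) //= big1 ?addr0 => [|l /negbTE l_neq_j]; rewrite !mxE /Se_entry.
  by rewrite eqxx (inj_eq enum_val_inj).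
by rewrite (inj_eq enum_val_inj) l_neq_j mulr0.
Qed.

Lemma secular_det_code (k : R) :
  (code_degprod c)%:R * secular_det G k =
  zpeval (expi k) (zpdet (size (code_bonds c)) (code_mx c)).
Proof.
rewrite zpeval_det size_code_bonds code_mxE det_mulmx det_diag code_degprodE.
congr (_ * _).
rewrite (eq_bigr (fun i => (qdeg (borig (enum_val i)))%:R)) => [|i _].
  by rewrite -(big_enum_val (fun b : bond G => (qdeg (borig b))%:R)).
by rewrite mxE.
Qed.

Lemma secular_det_coeffs m P :
    zpscale m (zpdet (size (code_bonds c)) (code_mx c)) =
    zpscale (Z.of_nat (code_degprod c)) P ->
  forall k, zcast m * secular_det G k = zpeval (expi k) P.
Proof.
move=> det_coeffs k; have degprod_neq0 : (code_degprod c)%:R != 0 :> R[i].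
  by rewrite pnatr_eq0 code_degprod_neq0.
apply: (mulfI degprod_neq0); rewrite mulrCA secular_det_code -zpevalZ det_coeffs.
by rewrite zpevalZ zcast_nat.
Qed.

Lemma secular_det_eq_Sigma :
    zpscale (Zpos 3) (zpdet (size (code_bonds c)) (code_mx c)) =
    zpscale (Z.of_nat (code_degprod c)) Sigma3_coeffs ->
  forall k, secular_det G k = Sigma k.
Proof.
move=> /secular_det_coeffs det_coeffs k.
have three_neq0 : 3%:R != 0 :> R[i] by rewrite pnatr_eq0.
by apply: (mulfI three_neq0); rewrite -zpeval_Sigma3 -det_coeffs.
Qed.

End Encoding.

Lemma enum_prod (T1 T2 : finType) :
  enum {: T1 * T2} = [seq (x, y) | x <- enum T1, y <- enum T2].
Proof. by rewrite -[RHS]/(prod_enum T1 T2) enumT unlock. Qed.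

Lemma enum_bool : enum {: bool} = [:: true; false].
Proof. by rewrite enumT unlock. Qed.

Definition edge_bonds (n : nat) : seq (nat * bool) :=
  [seq (e, d) | e <- iota 0 n, d <- [:: true; false]].

Lemma ord_bond_codes n :
  [seq (val b.1, b.2) | b <- enum {: 'I_n * bool}] = edge_bonds n.
Proof.
rewrite /edge_bonds enum_prod enum_bool -val_enum_ord.
by elim: (enum 'I_n) => //= e s ->.
Qed.

Definition G1_code : qgraph_code :=
  QGraphCode (fun _ => 0%N) (fun e => if e == 0%N then 0%N else 1%N)
             (fun e => if e == 0%N then 4%N else 1%N) (edge_bonds 2).

Definition G2_code : qgraph_code :=
  QGraphCode (fun e : nat => if (e <= 2)%N then 0%N else 1%N)
             (fun e : nat => if (e <= 1)%N then 1%N else e)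
             (fun _ => 1%N) (edge_bonds 5).

Theorem mainTheorem2 (R : realType) :
  (forall k : R, secular_det (G1 R) k = Sigma k) /\
  (forall k : R, secular_det (G2 R) k = Sigma k).
Proof.
split.
- apply: (@secular_det_eq_Sigma R (G1 R) G1_code val val val_inj val_inj).
  + by [].
  + by move=> e /=; case: eqP.
  + by move=> e /=; case: eqP.
  + exact: ord_bond_codes.
  + by vm_compute.
- apply: (@secular_det_eq_Sigma R (G2 R) G2_code val val val_inj val_inj).
  + by move=> e; rewrite /= /G2_src; case: ifP; rewrite inordK.
  + by move=> e; rewrite /= /G2_tgt; case: ifP; rewrite ?inordK.
  + by [].
  + exact: ord_bond_codes.
  + by vm_compute.
Qed.
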